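(* Let $G$ be a graph. Then $G$ has exactly one minimum zero forcing set (i.e., $G$ is a unique zero forcing graph) if and only if $G$ has no edges.
   Context: Zero forcing: in a graph $G$, starting with an initial set $S\subseteq V(G)$ of active vertices, repeatedly apply the rule: if an active vertex $u$ has exactly one non-active neighbor $v$, then $v$ becomes active. $S$ is a zero forcing set if eventually all vertices become active; a minimum zero forcing set is a zero forcing set of minimum size. *)

From mathcomp Require Import all_boot.
Set Implicit Arguments. Unset Strict Implicit. Unset Printing Implicit Defensive.

Definition simple_graph (V : finType) (e : rel V) : Prop :=
  symmetric e /\ irreflexive e.

Definition zf_step (V : finType) (e : rel V) (S : {set V}) : {set V} :=
  S :|: [set v | [exists u, [&& u \in S, e u v, v \notin S &
              [forall w, (e u w && (w \notin S)) ==> (w == v)]]]].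

(* The final set of active vertices (the process stabilises after at most
   #|V| rounds since S only grows). *)
Definition zf_closure (V : finType) (e : rel V) (S : {set V}) : {set V} :=
  iter #|V| (zf_step e) S.

Definition zero_forcing_set (V : finType) (e : rel V) (S : {set V}) : bool :=
  zf_closure e S == [set: V].

Definition minimum_zero_forcing_set (V : finType) (e : rel V) (S : {set V}) : Prop :=
  zero_forcing_set e S /\
  forall S' : {set V}, zero_forcing_set e S' -> #|S| <= #|S'|.

Definition unique_zero_forcing_graph (V : finType) (e : rel V) : Prop :=
  exists S : {set V}, minimum_zero_forcing_set e S /\
    forall S' : {set V}, minimum_zero_forcing_set e S' -> S' = S.

Definition edgeless (V : finType) (e : rel V) : Prop :=
  forall u v : V, ~~ e u v.

From mathcomp Require Import all_boot.
From mathcomp Require Import zify.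
Set Implicit Arguments. Unset Strict Implicit. Unset Printing Implicit Defensive.

(* A zero forcing set S is recorded by a chronology: every v outside S gets a
   forcer f v and a time t v at which it is forced.  Reversing a chronology
   (the last vertex of each forcing chain becomes active initially, forcers
   are followed backwards, time runs backwards) yields a zero forcing set T of
   the same size.  T is the complement of the set of forcers, and the first
   forcer lies in S but not in T, so T differs from S unless S is all of V.
   Hence a minimum zero forcing set other than V is never unique.  If the
   graph has an edge uv, then V minus v is zero forcing, so minimum zero
   forcing sets are proper; if it has no edge, nothing is ever forced and V
   is the only zero forcing set. *)

Section ZeroForcing.

Variables (V : finType) (e : rel V).

Local Notation zf_iter n S := (iter n (zf_step e) S).

Definition forces (A : {set V}) (u v : V) : Prop :=
  [/\ u \in A, e u v & forall w, e u w -> w != v -> w \in A].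

Lemma forces_subset (A B : {set V}) u v :
  A \subset B -> forces A u v -> forces B u v.
Proof.
move=> /subsetP AB [uA euv uN]; split=> [||w euw wv]; [exact: AB|done|].
exact/AB/uN.
Qed.

Lemma subset_zf_step (S : {set V}) : S \subset zf_step e S.
Proof. exact: subsetUl. Qed.

Lemma zf_iter_subset (S : {set V}) m n : m <= n -> zf_iter m S \subset zf_iter n S.
Proof.
elim: n => [|n IH]; first by rewrite leqn0 => /eqP ->.
rewrite leq_eqVlt => /orP [/eqP -> //|/IH mn].
exact: subset_trans mn (subset_zf_step _).
Qed.

Lemma zf_step_forces (A B : {set V}) u v :
  A \subset B -> forces A u v -> v \in zf_step e B.
Proof.
move=> /subsetP AB [uA euv uN]; rewrite inE.
case vB: (v \in B) => //=; rewrite inE; apply/existsP; exists u.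
rewrite AB // euv vB; apply/forallP => w; apply/implyP => /andP [euw wB].
by apply: contraNT wB => wv; exact/AB/uN.
Qed.

Lemma zf_stepP (A : {set V}) v :
  v \in zf_step e A -> v \notin A -> exists u, forces A u v.
Proof.
case/setUP=> [-> //|]; rewrite inE => /existsP [u /and4P [uA euv _ /forallP uN]] _.
exists u; split=> // w euw wv.
by apply: contraTT (uN w) => wA; rewrite euw wA.
Qed.

Definition active_before (S : {set V}) (t : V -> nat) (v : V) : {set V} :=
  [set x | (x \in S) || (t x < t v)].

Definition chronology (S : {set V}) (f : V -> V) (t : V -> nat) : Prop :=
  forall v, v \notin S -> forces (active_before S t v) (f v) v.

Lemma chronology_zero_forcing S f t : chronology S f t -> zero_forcing_set e S.
Proof.
move=> chr.
pose earlier v := [set x | (x \notin S) && (t x < t v)].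
have earlier_lt x v : x \notin S -> t x < t v -> #|earlier x| < #|earlier v|.
  move=> xS txv; apply/proper_card/properP; split.
    by apply/subsetP => y; rewrite !inE => /andP [-> /ltn_trans ->].
  by exists x; rewrite !inE ?xS ?txv ?ltnn.
have forced n v : #|earlier v| < n -> v \in zf_iter #|earlier v|.+1 S.
  elim: n v => [//|n IH] v ltvn.
  case vS: (v \in S); first exact: subsetP (zf_iter_subset S (leq0n _)) v vS.
  apply: zf_step_forces (chr v (negbT vS)).
  apply/subsetP => x; rewrite inE; case: (boolP (x \in S)) => [xS _ | xS /= txv].
    exact: subsetP (zf_iter_subset S (leq0n _)) x xS.
  have ltxv := earlier_lt x v xS txv.
  exact: subsetP (zf_iter_subset S ltxv) x (IH x (leq_trans ltxv ltvn)).
rewrite /zero_forcing_set eqEsubset subsetT; apply/subsetP => v _.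
have ltvV : #|earlier v| < #|V|.
  have := max_card (v |: earlier v); by rewrite cardsU1 inE ltnn andbF.
exact: subsetP (zf_iter_subset S ltvV) v (forced _ v (ltnSn _)).
Qed.

Lemma zero_forcing_chronology S :
  zero_forcing_set e S -> exists f t, chronology S f t.
Proof.
move=> /eqP zfS.
have reached v : exists k, v \in zf_iter k S.
  by exists #|V|; rewrite -/(zf_closure e S) zfS inE.
pose t v := ex_minn (reached v).
have tP v : v \in zf_iter (t v) S by rewrite /t; case: ex_minnP.
have t_min v k : v \in zf_iter k S -> t v <= k.
  by rewrite /t; case: ex_minnP => m _ /[apply].
have before v : zf_iter (t v).-1 S \subset active_before S t v.
  apply/subsetP => x xI; rewrite inE; case: (posnP (t v)) => [tv0 | tv_gt0].
    by move: xI; rewrite tv0 => ->.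
  by have := t_min x _ xI; rewrite orbC; lia.
pose forcer_of v u := v \notin S -> forces (active_before S t v) u v.
suff [f fP] : exists f : V -> V, forall v, forcer_of v (f v) by exists f, t.
apply: fin_all_exists => v; rewrite /forcer_of; case vS: (v \in S); first by exists v.
have t_gt0 : 0 < t v.
  by rewrite lt0n; apply: contraFneq vS => t0; move: (tP v); rewrite t0.
have vN : v \notin zf_iter (t v).-1 S by apply/negP => /t_min; lia.
have [u uF] : exists u, forces (zf_iter (t v).-1 S) u v.
  by apply: zf_stepP vN; rewrite -iterS prednK.
by exists u => _; exact: forces_subset (before v) uF.
Qed.

Section Reversal.

Hypothesis e_sym : symmetric e.
Variables (S : {set V}) (f : V -> V) (t : V -> nat).
Hypothesis chr : chronology S f t.

Lemma chronology_forced_earlier v v' :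
  v \notin S -> v' \notin S -> (v == f v') || e (f v') v && (v != v') -> t v < t v'.
Proof.
move=> vS v'S near; have [fv'A _ fv'N] := chr v'S.
have : v \in active_before S t v'.
  by case/orP: near => [/eqP -> // | /andP [efv'v vv']]; exact: fv'N.
by rewrite inE (negbTE vS).
Qed.

Lemma forcer_inj : {in ~: S &, injective f}.
Proof.
move=> v v'; rewrite !inE => vS v'S fvv'; apply/eqP; apply: contraT => vv'.
have [_ efvv _] := chr vS; have [_ efv'v' _] := chr v'S.
have : t v' < t v.
  by apply: chronology_forced_earlier => //; apply/orP; right; rewrite fvv' efv'v' eq_sym.
have : t v < t v'.
  by apply: chronology_forced_earlier => //; apply/orP; right; rewrite -fvv' efvv.
lia.
Qed.

Definition reversal : {set V} := ~: (f @: ~: S).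

Lemma notin_reversal u : (u \notin reversal) = (u \in f @: ~: S).
Proof. by rewrite inE negbK. Qed.

Let g u := odflt u [pick v in ~: S | f v == u].

Let gK v : v \notin S -> g (f v) = v.
Proof.
move=> vS; rewrite /g; case: pickP => [v' /andP [v'S /eqP] | /(_ v)].
  by move=> fv; apply: (forcer_inj v'S); rewrite ?inE.
by rewrite inE vS eqxx.
Qed.

Let N := \max_(v : V) t v.

Let reversed_time u := N - t (g u).

Lemma reversal_earlier v w :
  v \notin S -> (w == v) || e v w && (w != f v) ->
  w \in active_before reversal reversed_time (f v).
Proof.
move=> vS vw; rewrite inE; case: (boolP (w \in reversal)) => //=.
rewrite notin_reversal => /imsetP [v' v'S wE]; subst w; rewrite inE in v'S.
have : t v < t v'.
  apply: chronology_forced_earlier => //.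
  case/orP: vw => [fv'v | /andP [evfv' fvv']]; first by rewrite eq_sym fv'v.
  by apply/orP; right; rewrite e_sym evfv'; apply: contraNneq fvv' => ->.
have : t v' <= N := leq_bigmax v'.
rewrite /reversed_time !gK //; lia.
Qed.

Lemma reversal_chronology : chronology reversal g reversed_time.
Proof.
move=> u; rewrite notin_reversal => /imsetP [v]; rewrite inE => vS ->.
have [_ efvv _] := chr vS; rewrite gK //; split.
- by apply: reversal_earlier; rewrite ?eqxx.
- by rewrite e_sym.
- by move=> w evw wfv; apply: reversal_earlier; rewrite ?evw ?wfv ?orbT.
Qed.

Lemma reversal_zero_forcing : zero_forcing_set e reversal.
Proof. exact: chronology_zero_forcing reversal_chronology. Qed.

Lemma card_reversal : #|reversal| = #|S|.
Proof.
have := cardsC reversal; have := cardsC S.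
rewrite /reversal setCK (card_in_imset forcer_inj); lia.
Qed.

Lemma reversal_neq : S != setT -> reversal != S.
Proof.
rewrite -properT => /properP [_ [v0 _ v0S]].
case: (@arg_minnP _ v0 [pred x | x \notin S] t v0S) => v vS vmin.
have [fvA _ _] := chr vS.
have fvS : f v \in S.
  move: fvA; rewrite inE => /orP [// | ltfvv].
  by apply: contraTT ltfvv => /vmin; rewrite -leqNgt.
apply: contraTneq fvS => <-; rewrite notin_reversal; apply: imset_f; by rewrite inE.
Qed.

End Reversal.

Lemma zero_forcing_setC1 u v : e u v -> u != v -> zero_forcing_set e [set~ v].
Proof.
move=> euv uv; apply: (@chronology_zero_forcing _ (fun=> u) (fun=> 0)) => x.
rewrite !inE negbK => /eqP ->; split=> [||w _ wv]; by rewrite ?inE ?uv ?wv.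
Qed.

Lemma zf_step_edgeless S : edgeless e -> zf_step e S = S.
Proof.
move=> noE; apply/setUidPl/subsetP => v; rewrite inE => /existsP [u /and4P [_ euv _ _]].
by have := noE u v; rewrite euv.
Qed.

Lemma zero_forcing_edgeless S : edgeless e -> zero_forcing_set e S = (S == setT).
Proof.
by move=> noE; rewrite /zero_forcing_set /zf_closure iter_fix ?zf_step_edgeless.
Qed.

End ZeroForcing.

Theorem corollary3p3 (V : finType) (e : rel V) (He : simple_graph e) :
  unique_zero_forcing_graph e <-> edgeless e.
Proof.
case: He => e_sym e_irr; split=> [[S [[zfS minS] uniqS]] u v | noE].
- apply/negP => euv.
  have uv : u != v by apply: contraTneq euv => ->; rewrite e_irr.
  have S_proper : S != setT.
    apply: contraTneq (minS _ (zero_forcing_setC1 euv uv)) => ->.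
    by rewrite cardsT cardsC1 -ltnNge ltn_predL; apply/card_gt0P; exists v.
  have [f [t chr]] := zero_forcing_chronology zfS.
  have := reversal_neq chr S_proper; rewrite (uniqS (reversal S f)) ?eqxx //.
  split=> [|S' zfS']; first exact: (reversal_zero_forcing e_sym chr).
  by rewrite (card_reversal chr); exact: minS.
- have zfE S := zero_forcing_edgeless S noE.
  exists setT; split=> [|S' [zfS' _]]; last by apply/eqP; rewrite -zfE.
  by split=> [|S']; rewrite zfE // => /eqP ->.
Qed.
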